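(* Let $k\ge1$ and let $\phi=(\phi_1,\dots,\phi_k):\mathbb{D}^k\to\overline{\mathbb{D}}^k$ be an analytic map such that $C_\phi f=f\circ\phi$ maps $A^+(\mathbb{T}^k)$ into itself. Then $C_\phi:A^+(\mathbb{T}^k)\to A^+(\mathbb{T}^k)$ is an isometry if and only if there exist a square matrix $A=(a_{ij})_{1\le i,j\le k}$ with $a_{ij}\in\mathbb{N}_0$ and $\det A\ne0$, and complex numbers $\epsilon_1,\dots,\epsilon_k$ of modulus $1$, such that $$\phi_i(z)=\epsilon_iz_1^{a_{i1}}\cdots z_k^{a_{ik}},\qquad1\le i\le k,\ z=(z_1,\dots,z_k)\in\mathbb{D}^k.$$
   Context: $A^+(\mathbb{T}^k)$ is the algebra of functions $f(z)=\sum_{\alpha\in\mathbb{N}_0^k}a_\alpha z^\alpha$ on $\overline{\mathbb{D}}^k$ with $\|f\|_{A^+(\mathbb{T}^k)}=\sum|a_\alpha|<\infty$, a Banach algebra under pointwise multiplication. $\mathbb{N}_0=\{0,1,2,\dots\}$. *)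

From mathcomp Require Import all_boot all_algebra.
From mathcomp Require Export complex.
From mathcomp Require Export reals.
Import GRing.Theory Num.Theory.

Set Implicit Arguments.
Unset Strict Implicit.
Unset Printing Implicit Defensive.

Local Open Scope ring_scope.

Section Aplus.
Variables (R : realType) (k : nat).
Local Notation C := R[i].

Definition mono (z : 'I_k -> C) (al : 'I_k -> nat) : C :=
  \prod_(j < k) z j ^+ al j.

Definition boxsum (N : nat) (F : ('I_k -> nat) -> C) : C :=
  \sum_(al : {ffun 'I_k -> 'I_N}) F (fun j => nat_of_ord (al j)).

Definition abs_summable (F : ('I_k -> nat) -> C) : Prop :=
  exists M : C, forall N, boxsum N (fun al => `|F al|) <= M.

(* the family F is absolutely summable over N_0^k with sum S
   (for absolutely summable families the sum does not depend on the
   exhaustion, so exhausting by boxes is no loss) *)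
Definition has_sum (F : ('I_k -> nat) -> C) (S : C) : Prop :=
  abs_summable F /\
  forall e : C, 0 < e -> exists N0 : nat, forall N, (N0 <= N)%N ->
    `|boxsum N F - S| < e.

Definition open_polydisc (z : 'I_k -> C) : Prop := forall j, `|z j| < 1.
Definition closed_polydisc (z : 'I_k -> C) : Prop := forall j, `|z j| <= 1.

Definition Aplus_rep (a : ('I_k -> nat) -> C) (f : ('I_k -> C) -> C) : Prop :=
  abs_summable a /\
  forall z, closed_polydisc z -> has_sum (fun al => a al * mono z al) (f z).

(* f belongs to A^+(T^k) (f is only relevant on the closed polydisc) *)
Definition in_Aplus (f : ('I_k -> C) -> C) : Prop := exists a, Aplus_rep a f.

Definition Aplus_norm_is (f : ('I_k -> C) -> C) (S : C) : Prop :=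
  exists a, Aplus_rep a f /\ has_sum (fun al => `|a al|) S.

Definition analytic_on_polydisc (g : ('I_k -> C) -> C) : Prop :=
  forall w, open_polydisc w ->
    exists r : C, 0 < r /\ exists c : ('I_k -> nat) -> C,
      forall z, (forall j, `|z j - w j| < r) ->
        has_sum (fun al => c al * mono (fun j => z j - w j) al) (g z).

Definition Cphi_maps_Aplus (phi : ('I_k -> C) -> ('I_k -> C)) : Prop :=
  forall f, in_Aplus f ->
    exists g, in_Aplus g /\ forall z, open_polydisc z -> g z = f (phi z).

Definition Cphi_isometry (phi : ('I_k -> C) -> ('I_k -> C)) : Prop :=
  forall f g (S : C), in_Aplus f -> in_Aplus g ->
    (forall z, open_polydisc z -> g z = f (phi z)) ->
    Aplus_norm_is f S -> Aplus_norm_is g S.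

End Aplus.

From Stdlib Require Import ClassicalEpsilon FunctionalExtensionality Classical.
From mathcomp Require Import all_boot all_algebra.
From mathcomp Require Import complex reals.
From mathcomp Require Import zify lra ring.
Import GRing.Theory Num.Theory order.Order.TTheory.
Local Open Scope ring_scope.
Local Open Scope complex_scope.

Set Implicit Arguments.
Unset Strict Implicit.
Unset Printing Implicit Defensive.

(* Coefficients are unique (let the variables go to 0 one at a time), so the
   A^+ norm of f is the l^1 norm of its coefficient family.

   If phi_i = eps_i z^(A_i), the coefficients of f o phi are those of f,
   twisted by the unimodular factors eps^alpha and pushed forward along the map
   alpha |-> alpha A, which is injective when det A <> 0; so norms are kept.

   Conversely, let r_a be the coefficient family of phi^a = (z^a) o phi; it has
   norm 1.  As phi^(a+b) = phi^a phi^b, r_(a+b) is the Cauchy product of r_a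
   and r_b, and since its norm 1 is the product of their norms no cancellation
   occurs: s in supp r_a and t in supp r_b give s + t in supp r_(a+b).  The
   isometry applied to z^a + l z^b with |l| = 1 gives |r_a + l r_b| = 2 for all
   such l, which forces supp r_a and supp r_b to be disjoint when a <> b.
   Hence a relation sum_l w_l v_l = sum_l w'_l v_l between points
   v_l in supp r_(e_(c_l)) lifts to sum_l w_l e_(c_l) = sum_l w'_l e_(c_l).
   Any k+1 points of N^k satisfy a nontrivial such relation, so supp r_(e_i) is
   a single point A_i and phi_i = r_(e_i)(A_i) z^(A_i); a relation among the
   rows A_i would give one among the e_i, so det A <> 0. *)

Section RealNorm.
Variable R : realType.
Local Notation C := R[i].

(* The modulus of a complex number as an element of R, so that inequalities
   between moduli can be handled by [lra]/[nra]. *)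
Definition rnorm (x : C) : R := complex.Re `|x|.

Lemma norm_rnorm (x : C) : `|x| = (rnorm x)%:C.
Proof. by rewrite /rnorm RRe_real ?normr_real. Qed.

Lemma rnorm_ge0 x : 0 <= rnorm x.
Proof. by rewrite -ler0c -norm_rnorm. Qed.

Lemma rnormD x y : rnorm (x + y) <= rnorm x + rnorm y.
Proof. by rewrite -lecR rmorphD /= -!norm_rnorm ler_normD. Qed.

Lemma rnormM x y : rnorm (x * y) = rnorm x * rnorm y.
Proof. by apply: (@complexI R); rewrite rmorphM /= -!norm_rnorm normrM. Qed.

Lemma rnormN x : rnorm (- x) = rnorm x.
Proof. by rewrite /rnorm normrN. Qed.

Lemma rnorm0 : rnorm 0 = 0.
Proof. by rewrite /rnorm normr0. Qed.

Lemma rnorm1 : rnorm 1 = 1.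
Proof. by rewrite /rnorm normr1. Qed.

Lemma rnorm_eq0 x : (rnorm x == 0) = (x == 0).
Proof. by rewrite -(inj_eq (@complexI R)) -norm_rnorm normr_eq0. Qed.

Lemma rnorm_distC x y : rnorm (x - y) = rnorm (y - x).
Proof. by rewrite -rnormN opprB. Qed.

Lemma rnormV x : x != 0 -> rnorm x^-1 = (rnorm x)^-1.
Proof.
move=> x0; have n0 : rnorm x != 0 by rewrite rnorm_eq0.
by apply: (mulfI n0); rewrite -rnormM !mulfV // rnorm1.
Qed.

Lemma rnormX x n : rnorm (x ^+ n) = rnorm x ^+ n.
Proof. by elim: n => [|n IH]; rewrite ?expr0 ?rnorm1 // !exprS rnormM IH. Qed.

Lemma rnorm_prod (I : Type) (s : seq I) (F : I -> C) :
  rnorm (\prod_(i <- s) F i) = \prod_(i <- s) rnorm (F i).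
Proof. exact: (big_morph rnorm rnormM rnorm1). Qed.

Lemma rnorm_sum (I : Type) (s : seq I) (P : pred I) (F : I -> C) :
  rnorm (\sum_(i <- s | P i) F i) <= \sum_(i <- s | P i) rnorm (F i).
Proof.
rewrite -lecR rmorph_sum /= -norm_rnorm.
under [X in _ <= X]eq_bigr do rewrite -norm_rnorm.
exact: ler_norm_sum.
Qed.

Lemma rnorm_sumB (I : Type) (s : seq I) (F G : I -> C) :
  rnorm (\sum_(i <- s) F i - \sum_(i <- s) G i) <= \sum_(i <- s) rnorm (F i - G i).
Proof. by rewrite -sumrB; apply: rnorm_sum. Qed.

Lemma rnorm_real (a : R) : rnorm a%:C = `|a|.
Proof.
apply: (@complexI R); rewrite -norm_rnorm.
have [a0|a0] := lerP 0 a; first by rewrite !ger0_norm // ler0c.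
by rewrite !ltr0_norm ?ltcR // rmorphN.
Qed.

Lemma rnorm_norm (x : C) : rnorm `|x| = rnorm x.
Proof. by rewrite {1}norm_rnorm rnorm_real ger0_norm // rnorm_ge0. Qed.

Lemma ltc_rnorm x e : (`|x| < e%:C) = (rnorm x < e).
Proof. by rewrite norm_rnorm ltcR. Qed.

Lemma lec_rnorm x e : (`|x| <= e%:C) = (rnorm x <= e).
Proof. by rewrite norm_rnorm lecR. Qed.

Lemma rnorm_lt1 (x : C) : (`|x| < 1) = (rnorm x < 1).
Proof. by rewrite -ltc_rnorm. Qed.

Lemma rnorm_le1 (x : C) : (`|x| <= 1) = (rnorm x <= 1).
Proof. by rewrite -lec_rnorm. Qed.

Lemma gt0_realC (e : C) : 0 < e -> e = (complex.Re e)%:C /\ 0 < complex.Re e.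
Proof.
move=> e0; have er : e \is Num.real by rewrite gtr0_real.
by split; rewrite ?RRe_real // -ltcR RRe_real.
Qed.

End RealNorm.

Section Boxes.
Variable k : nat.
Local Notation mi := {ffun 'I_k -> nat}.

(* Multi-indices are finite functions, so that they have a decidable equality;
   [box N] lists the multi-indices in {0, ..., N-1}^k, without repetition. *)
Definition box N : seq mi :=
  map (fun a : {ffun 'I_k -> 'I_N} => [ffun j => (a j : nat)])
      (enum {ffun 'I_k -> 'I_N}).

Lemma mem_boxP N (x : mi) : reflect (forall j, (x j < N)%N) (x \in box N).
Proof.
apply: (iffP mapP) => [[a _ ->] j|H]; first by rewrite ffunE.
exists [ffun j => Ordinal (H j)]; first by rewrite mem_enum.
by apply/ffunP => j; rewrite !ffunE.
Qed.

Lemma box_uniq N : uniq (box N).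
Proof.
rewrite map_inj_uniq ?enum_uniq // => a b /ffunP H.
by apply/ffunP => j; apply: val_inj; have := H j; rewrite !ffunE.
Qed.

Lemma boxsumE (R : realType) N (F : ('I_k -> nat) -> R[i]) :
  boxsum N F = \sum_(x <- box N) F x.
Proof.
rewrite /boxsum /box big_map big_enum /=.
apply: eq_bigr => a _; congr F; apply: functional_extensionality => j.
by rewrite ffunE.
Qed.

Lemma box_mono N M (x : mi) : (N <= M)%N -> x \in box N -> x \in box M.
Proof.
by move=> NM /mem_boxP H; apply/mem_boxP => j; apply: leq_trans (H j) NM.
Qed.

Lemma mem_box_self (y : mi) : y \in box (\sum_j y j).+1.
Proof. by apply/mem_boxP => j; rewrite ltnS (bigD1 j) //= leq_addr. Qed.

Lemma box_cover (s : seq mi) : exists M, forall x, x \in s -> x \in box M.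
Proof.
elim: s => [|y s [M HM]]; first by exists 0%N.
exists (maxn M (\sum_j y j).+1) => x; rewrite inE => /orP[/eqP->|/HM].
  by apply: box_mono (mem_box_self y); rewrite leq_maxr.
by apply: box_mono; rewrite leq_maxl.
Qed.

Lemma big_mem_subseq (V : nmodType) (s t : seq mi) (F : mi -> V) :
  uniq s -> uniq t -> {subset t <= s} ->
  \sum_(x <- s | x \in t) F x = \sum_(x <- t) F x.
Proof.
move=> us ut ts; rewrite -big_filter; apply: perm_big; apply: uniq_perm.
- exact: filter_uniq.
- exact: ut.
by move=> x; rewrite mem_filter; apply/andP/idP => [[]//|xt]; split => //; apply: ts.
Qed.

Lemma eq_big_uniq_mem (V : nmodType) (s1 s2 : seq mi) (P : pred mi) (F : mi -> V) :
  uniq s1 -> uniq s2 -> (forall x, P x -> (x \in s1) = (x \in s2)) ->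
  \sum_(x <- s1 | P x) F x = \sum_(x <- s2 | P x) F x.
Proof.
move=> u1 u2 H; rewrite -big_filter -[RHS]big_filter; apply: perm_big.
apply: uniq_perm; try exact: filter_uniq.
by move=> x; rewrite !mem_filter; case Px: (P x) => //=; apply: H.
Qed.

Lemma ler_box_sum (R : realType) (F : mi -> R) N M : (N <= M)%N ->
  (forall x, 0 <= F x) -> \sum_(x <- box N) F x <= \sum_(x <- box M) F x.
Proof.
move=> NM F0.
rewrite -(big_mem_subseq F (box_uniq M) (box_uniq N)); last by move=> x; apply: box_mono.
by rewrite [X in _ <= X](bigID (fun x => x \in box N)) /= lerDl sumr_ge0.
Qed.

Lemma box_sum_finite (V : nmodType) (F : mi -> V) M N :
  (forall x, x \notin box M -> F x = 0) -> (M <= N)%N ->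
  \sum_(x <- box N) F x = \sum_(x <- box M) F x.
Proof.
move=> HF MN; rewrite [LHS](bigID (fun x => x \in box M)) /= big_mem_subseq ?box_uniq //.
  by rewrite [X in _ + X = _]big1 ?addr0 // => x /HF.
by move=> x; apply: box_mono.
Qed.

Lemma box_sum_point (V : nmodType) (y : mi) (c : V) M : y \in box M ->
  \sum_(x <- box M) (if x == y then c else 0) = c.
Proof.
move=> yM; rewrite -big_mkcond /= -big_filter filter_pred1_uniq ?box_uniq //.
by rewrite big_seq1.
Qed.

End Boxes.

Arguments box_uniq {k} N.

Section Limits.
Variable R : realType.
Local Notation C := R[i].

Definition cvgR (u : nat -> R) (l : R) := forall e : R, 0 < e ->
  exists N0, forall N, (N0 <= N)%N -> `|u N - l| < e.
Definition cvgC (u : nat -> C) (l : C) := forall e : R, 0 < e ->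
  exists N0, forall N, (N0 <= N)%N -> rnorm (u N - l) < e.

Lemma eq0_small_rnorm (x : C) : (forall e : R, 0 < e -> rnorm x < e) -> x = 0.
Proof.
move=> H; apply/eqP; rewrite -rnorm_eq0; apply/eqP.
have h0 := rnorm_ge0 x.
case: (lerP (rnorm x) 0) => hx; first by lra.
have := H _ hx; lra.
Qed.

Lemma cvgC_unique u l l' : cvgC u l -> cvgC u l' -> l = l'.
Proof.
move=> H H'; apply/eqP; rewrite -subr_eq0; apply/eqP; apply: eq0_small_rnorm => e e0.
have e2 : 0 < e / 2 by lra.
have [N1 HN1] := H _ e2; have [N2 HN2] := H' _ e2.
have := HN1 (maxn N1 N2) (leq_maxl _ _); have := HN2 (maxn N1 N2) (leq_maxr _ _).
have := rnormD (l - u (maxn N1 N2)) (u (maxn N1 N2) - l').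
rewrite [rnorm (l - _)]rnorm_distC.
have -> : l - u (maxn N1 N2) + (u (maxn N1 N2) - l') = l - l' by ring.
lra.
Qed.

Lemma cvgR_cvgC (u : nat -> R) l : cvgR u l <-> cvgC (fun N => (u N)%:C) l%:C.
Proof.
by split => H e e0; have [N0 H0] := H e e0; exists N0 => N HN; have := H0 N HN;
  rewrite -rmorphB rnorm_real.
Qed.

Lemma cvgR_unique u l l' : cvgR u l -> cvgR u l' -> l = l'.
Proof.
by move=> /cvgR_cvgC H /cvgR_cvgC H'; apply: (@complexI R); apply: cvgC_unique H H'.
Qed.

Lemma cvgR_le u v a b : cvgR u a -> cvgR v b ->
  (exists N0, forall N, (N0 <= N)%N -> u N <= v N) -> a <= b.
Proof.
move=> Hu Hv [N0 H0]; case: (lerP a b) => // ba.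
have e0 : 0 < (a - b) / 2 by lra.
have [N1 H1] := Hu _ e0; have [N2 H2] := Hv _ e0.
pose N := maxn N0 (maxn N1 N2).
have := H0 N (leq_maxl _ _).
have := H1 N (leq_trans (leq_maxl _ _) (leq_maxr _ _)).
have := H2 N (leq_trans (leq_maxr _ _) (leq_maxr _ _)).
rewrite !ltr_norml; lra.
Qed.

Lemma cvgR_cst c : cvgR (fun _ => c) c.
Proof. by move=> e e0; exists 0%N => N _; rewrite subrr normr0. Qed.

Lemma cvgCD u v a b : cvgC u a -> cvgC v b -> cvgC (fun N => u N + v N) (a + b).
Proof.
move=> Hu Hv e e0; have e2 : 0 < e / 2 by lra.
have [N1 H1] := Hu _ e2; have [N2 H2] := Hv _ e2.
exists (maxn N1 N2) => N HN.
have := H1 N (leq_trans (leq_maxl _ _) HN); have := H2 N (leq_trans (leq_maxr _ _) HN).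
have := rnormD (u N - a) (v N - b).
have -> : u N - a + (v N - b) = u N + v N - (a + b) by ring.
lra.
Qed.

Lemma cvgCMl c u a : cvgC u a -> cvgC (fun N => c * u N) (c * a).
Proof.
move=> Hu e e0.
have c0 : 0 < rnorm c + 1 by have := rnorm_ge0 c; lra.
have [N1 H1] := Hu (e / (rnorm c + 1)) (divr_gt0 e0 c0).
exists N1 => N HN; rewrite -mulrBr rnormM.
have := H1 N HN; have := rnorm_ge0 c; have := rnorm_ge0 (u N - a) => h1 h2 h3.
have : rnorm c * rnorm (u N - a) <= (rnorm c + 1) * rnorm (u N - a) by nra.
have : (rnorm c + 1) * rnorm (u N - a) < e.
  by rewrite mulrC -ltr_pdivlMr.
lra.
Qed.

Lemma cvgCN u a : cvgC u a -> cvgC (fun N => - u N) (- a).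
Proof.
move=> Hu e e0; have [N1 H1] := Hu e e0; exists N1 => N HN.
by rewrite -opprD rnormN; apply: H1.
Qed.

Lemma cvgCB u v a b : cvgC u a -> cvgC v b -> cvgC (fun N => u N - v N) (a - b).
Proof. by move=> Hu Hv; apply: cvgCD => //; apply: cvgCN. Qed.

Lemma cvgC_cst c : cvgC (fun _ => c) c.
Proof. by move=> e e0; exists 0%N => N _; rewrite subrr rnorm0. Qed.

Lemma cvgC_eventually u v a : cvgC u a -> (exists N0, forall N, (N0 <= N)%N -> u N = v N) ->
  cvgC v a.
Proof.
move=> Hu [N0 H0] e e0; have [N1 H1] := Hu e e0.
exists (maxn N0 N1) => N HN; rewrite -H0; first by apply: H1; apply: leq_trans HN; apply: leq_maxr.
by apply: leq_trans HN; apply: leq_maxl.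
Qed.

Lemma cvgC_sum (I : Type) (r : seq I) (u : I -> nat -> C) (a : I -> C) :
  (forall i, cvgC (u i) (a i)) ->
  cvgC (fun N => \sum_(i <- r) u i N) (\sum_(i <- r) a i).
Proof.
move=> H; elim: r => [|i r IH].
  rewrite big_nil; apply: (cvgC_eventually (cvgC_cst 0)); exists 0%N => N _; by rewrite big_nil.
rewrite big_cons; apply: (cvgC_eventually (cvgCD (H i) IH)); exists 0%N => N _; by rewrite big_cons.
Qed.

Lemma cvgC_squeeze u v w a : cvgC u a -> cvgR w 0 ->
  (forall N, rnorm (v N - u N) <= w N) -> cvgC v a.
Proof.
move=> Hu Hw Hb e e0; have e2 : 0 < e / 2 by lra.
have [N1 H1] := Hu _ e2; have [N2 H2] := Hw _ e2.
exists (maxn N1 N2) => N HN.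
have := H1 N (leq_trans (leq_maxl _ _) HN); have := H2 N (leq_trans (leq_maxr _ _) HN).
have := Hb N; have := rnormD (v N - u N) (u N - a).
have -> : v N - u N + (u N - a) = v N - a by ring.
rewrite subr0 => h1 h2; rewrite ltr_norml; lra.
Qed.

Lemma cvgC_half u a : cvgC u a -> cvgC (fun N => u (N %/ 2)%N) a.
Proof.
move=> Hu e e0; have [N1 H1] := Hu e e0; exists (N1 * 2)%N => N HN.
apply: H1; rewrite leq_divRL //.
Qed.

Lemma cvgC_bounded u a : cvgC u a -> exists B : R, forall N, rnorm (u N) <= B.
Proof.
move=> Hu; have [N1 H1] := Hu 1 ltr01.
exists (rnorm a + 1 + \sum_(i < N1) rnorm (u i)) => N.
case: (ltnP N N1) => hN.
  have h1 : 0 <= rnorm a + 1 by have := rnorm_ge0 a; lra.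
  rewrite (bigD1 (Ordinal hN)) //=.
  have : 0 <= \sum_(i < N1 | i != Ordinal hN) rnorm (u i) by apply: sumr_ge0 => *; exact: rnorm_ge0.
  lra.
have := H1 N hN; have := rnormD (u N - a) a; rewrite subrK.
have : 0 <= \sum_(i < N1) rnorm (u i) by apply: sumr_ge0 => *; exact: rnorm_ge0.
lra.
Qed.

Lemma cvgCM u v a b : cvgC u a -> cvgC v b -> cvgC (fun N => u N * v N) (a * b).
Proof.
move=> Hu Hv.
have [B HB] := cvgC_bounded Hu.
pose w N := (B + rnorm b + 1) * (rnorm (u N - a) + rnorm (v N - b)).
apply: (@cvgC_squeeze (fun N => a * b) _ w).
- exact: cvgC_cst.
- move=> e e0.
  have B0 : 0 < B + rnorm b + 1.
    have := HB 0%N; have := rnorm_ge0 (u 0%N); have := rnorm_ge0 b; lra.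
  have e2 : 0 < e / (B + rnorm b + 1) / 2.
    by apply: divr_gt0 => //; apply: divr_gt0.
  have [N1 H1] := Hu _ e2; have [N2 H2] := Hv _ e2.
  exists (maxn N1 N2) => N HN; rewrite subr0 /w.
  have := H1 N (leq_trans (leq_maxl _ _) HN); have := H2 N (leq_trans (leq_maxr _ _) HN).
  have := rnorm_ge0 (u N - a); have := rnorm_ge0 (v N - b) => g1 g2 h1 h2.
  rewrite ger0_norm; last by apply: mulr_ge0; lra.
  rewrite mulrC -ltr_pdivlMr //; lra.
- move=> N; rewrite /w.
  have -> : u N * v N - a * b = u N * (v N - b) + b * (u N - a) by ring.
  have := rnormD (u N * (v N - b)) (b * (u N - a)); rewrite !rnormM.
  have := HB N; have := rnorm_ge0 (u N); have := rnorm_ge0 b;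
  have := rnorm_ge0 (u N - a); have := rnorm_ge0 (v N - b) => *.
  nra.
Qed.

End Limits.

Section Summable.
Variable R : realType.
Local Notation C := R[i].
Variable k : nat.
Local Notation mi := {ffun 'I_k -> nat}.
Local Notation box := (@box k).

Definition summable (F : mi -> C) := exists M : R, forall N, \sum_(x <- box N) rnorm (F x) <= M.
Definition sums_to (F : mi -> C) (S : C) :=
  summable F /\ cvgC (fun N => \sum_(x <- box N) F x) S.

Lemma sum_norm_rnorm (s : seq mi) (F : mi -> C) :
  \sum_(x <- s) `|F x| = (\sum_(x <- s) rnorm (F x))%:C.
Proof. by rewrite rmorph_sum /=; apply: eq_bigr => x _; rewrite norm_rnorm. Qed.

Lemma abs_summableP (F : ('I_k -> nat) -> C) :
  abs_summable F <-> summable (fun x : mi => F x).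
Proof.
split.
  case=> M HM; exists (complex.Re M) => N; have := HM N.
  rewrite boxsumE sum_norm_rnorm lecE => /andP[_]; done.
case=> M HM; exists M%:C => N; rewrite boxsumE sum_norm_rnorm lecR; exact: HM.
Qed.

Lemma has_sumP (F : ('I_k -> nat) -> C) S :
  has_sum F S <-> sums_to (fun x : mi => F x) S.
Proof.
split.
  case=> /abs_summableP Hb Hl; split => // e e0.
  have e0' : 0 < e%:C by rewrite ltcR.
  have [N0 H0] := Hl _ e0'.
  by exists N0 => N HN; rewrite -ltc_rnorm -boxsumE; apply: H0.
case=> Hb Hl; split; first by apply/abs_summableP.
move=> e /gt0_realC [-> e0]; have [N0 H0] := Hl _ e0.
by exists N0 => N HN; rewrite ltc_rnorm boxsumE; apply: H0.
Qed.

Lemma sums_to_normP (a : mi -> C) (s : R) :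
  sums_to (fun x => `|a x|) s%:C <-> summable a /\ cvgR (fun N => \sum_(x <- box N) rnorm (a x)) s.
Proof.
have E N : rnorm (\sum_(x <- box N) `|a x| - s%:C) = `|\sum_(x <- box N) rnorm (a x) - s|.
  by rewrite sum_norm_rnorm -rmorphB rnorm_real.
split.
  case=> [[M HM] Hl]; split.
    by exists M => N; have := HM N; under eq_bigr do rewrite rnorm_norm.
  by move=> e e0; have [N0 H0] := Hl e e0; exists N0 => N HN; rewrite -E; apply: H0.
case=> [[M HM] Hl]; split.
  by exists M => N; under eq_bigr do rewrite rnorm_norm; apply: HM.
by move=> e e0; have [N0 H0] := Hl e e0; exists N0 => N HN; rewrite E; apply: H0.
Qed.

(* Otherwise the box sums would exceed every multiple of e. *)
Lemma box_sum_cauchy (G : mi -> R) : (forall x, 0 <= G x) ->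
  (exists M, forall N, \sum_(x <- box N) G x <= M) ->
  forall e, 0 < e -> exists N0, forall N,
    \sum_(x <- box N) G x <= \sum_(x <- box N0) G x + e.
Proof.
move=> G0 [M HM] e e0.
have S0 N : 0 <= \sum_(x <- box N) G x by apply: sumr_ge0.
apply: NNPP => H.
have H' : forall N0, exists N, \sum_(x <- box N0) G x + e < \sum_(x <- box N) G x.
  move=> N0; apply: NNPP => H2; apply: H; exists N0 => N.
  case: (lerP (\sum_(x <- box N) G x) (\sum_(x <- box N0) G x + e)) => // h.
  by exfalso; apply: H2; exists N.
have Hn : forall n : nat, exists N, n%:R * e <= \sum_(x <- box N) G x.
  elim=> [|n [N HN]]; first by exists 0%N; rewrite mul0r.
  have [N' HN'] := H' N; exists N'; rewrite -addn1 natrD; lra.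
have hM : 0 <= M by have := HM 0%N; have := S0 0%N; lra.
have [n hn] : exists n : nat, M / e < n%:R.
  by eexists; apply: archi_boundP; apply: divr_ge0 => //; apply: ltW.
have [N HN] := Hn n; have := HM N.
move: hn; rewrite ltr_pdivrMr // => hn; lra.
Qed.

Lemma box_sum_tail (G : mi -> R) : (forall x, 0 <= G x) ->
  (exists M, forall N, \sum_(x <- box N) G x <= M) ->
  forall e, 0 < e -> exists N0, forall s, uniq s ->
    (forall x, x \in s -> x \notin box N0) -> \sum_(x <- s) G x <= e.
Proof.
move=> G0 HM e e0; have [N0 HN0] := box_sum_cauchy G0 HM e0.
exists N0 => s us Hs; have [M' HM'] := box_cover s.
pose L := maxn M' N0.
have ut : uniq (box N0 ++ s).
  rewrite cat_uniq box_uniq us /= andbT; apply/hasPn => x xs; exact: Hs.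
have : \sum_(x <- box N0 ++ s) G x <= \sum_(x <- box L) G x.
  rewrite -(big_mem_subseq G (box_uniq L) ut).
    rewrite [X in _ <= X](bigID (fun x => x \in box N0 ++ s)) /= lerDl.
    by apply: sumr_ge0.
  move=> x; rewrite mem_cat => /orP[]; first by apply: box_mono; apply: leq_maxr.
  by move/HM'; apply: box_mono; apply: leq_maxl.
rewrite big_cat /=; have := HN0 L; lra.
Qed.

Lemma sums_to_superset F S : sums_to F S -> forall e, 0 < e -> exists N0, forall s, uniq s ->
  (forall x, x \in box N0 -> x \in s) -> rnorm (\sum_(x <- s) F x - S) < e.
Proof.
move=> [[M HM] Hl] e e0; have e2 : 0 < e / 2 by lra.
have [N1 H1] := Hl _ e2.
have [N2 H2] := box_sum_tail (fun x => rnorm_ge0 (F x)) (ex_intro _ M HM) e2.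
exists (maxn N1 N2) => s us Hs.
rewrite (bigID (fun x => x \in box (maxn N1 N2))) /= big_mem_subseq //; last exact: box_uniq.
have h1 := H1 (maxn N1 N2) (leq_maxl _ _).
have h2 : \sum_(x <- s | x \notin box (maxn N1 N2)) rnorm (F x) <= e / 2.
  rewrite -big_filter; apply: H2; first exact: filter_uniq.
  move=> x; rewrite mem_filter => /andP[hx _]; apply: contra hx.
  by apply: box_mono; apply: leq_maxr.
have h3 := rnorm_sum (s) (fun x => x \notin box (maxn N1 N2)) F.
have := rnormD (\sum_(x <- box (maxn N1 N2)) F x - S)
  (\sum_(x <- s | x \notin box (maxn N1 N2)) F x).
rewrite addrAC; lra.
Qed.

Lemma eq_sums_to (F G : mi -> C) S : (forall x, F x = G x) -> sums_to F S = sums_to G S.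
Proof. by move=> FG; rewrite (functional_extensionality _ _ FG). Qed.

Lemma sums_to_unique F S S' : sums_to F S -> sums_to F S' -> S = S'.
Proof. by move=> [_ H] [_ H']; apply: cvgC_unique H H'. Qed.

Lemma summableD F G : summable F -> summable G -> summable (fun x => F x + G x).
Proof.
move=> [M HM] [M' HM']; exists (M + M') => N.
apply: le_trans (_ : \sum_(x <- box N) (rnorm (F x) + rnorm (G x)) <= _).
  by apply: ler_sum => x _; apply: rnormD.
by rewrite big_split /=; apply: lerD.
Qed.

Lemma summableMl c F : summable F -> summable (fun x => c * F x).
Proof.
move=> [M HM]; exists (rnorm c * M) => N.
under eq_bigr do rewrite rnormM; rewrite -mulr_sumr.
by apply: ler_wpM2l; [apply: rnorm_ge0 | apply: HM].
Qed.

Lemma sums_toD F G S T : sums_to F S -> sums_to G T -> sums_to (fun x => F x + G x) (S + T).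
Proof.
move=> [bF lF] [bG lG]; split; first exact: summableD.
apply: (cvgC_eventually (cvgCD lF lG)); exists 0%N => N _; by rewrite big_split.
Qed.

Lemma sums_toMl c F S : sums_to F S -> sums_to (fun x => c * F x) (c * S).
Proof.
move=> [bF lF]; split; first exact: summableMl.
apply: (cvgC_eventually (cvgCMl c lF)); exists 0%N => N _; by rewrite mulr_sumr.
Qed.

Lemma sums_toN F S : sums_to F S -> sums_to (fun x => - F x) (- S).
Proof.
move=> H; have := sums_toMl (-1) H; rewrite mulN1r.
by have -> : (fun x => -1 * F x) = (fun x => - F x)
  by apply: functional_extensionality => x; rewrite mulN1r.
Qed.

Lemma sums_toB F G S T : sums_to F S -> sums_to G T -> sums_to (fun x => F x - G x) (S - T).
Proof. by move=> HF HG; apply: sums_toD => //; apply: sums_toN. Qed.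

Lemma sums_to_finite F M : (forall x, x \notin box M -> F x = 0) ->
  sums_to F (\sum_(x <- box M) F x).
Proof.
move=> HF; split.
  exists (\sum_(x <- box M) rnorm (F x)) => N.
  have h1 := @ler_box_sum _ _ (fun x => rnorm (F x)) _ _ (leq_maxl N M) (fun x => rnorm_ge0 (F x)).
  rewrite (@box_sum_finite _ _ (fun x => rnorm (F x)) M (maxn N M)) ?leq_maxr // in h1.
  by move=> x /HF ->; rewrite rnorm0.
apply: (cvgC_eventually (cvgC_cst _)); exists M => N HN.
by rewrite (box_sum_finite HF HN).
Qed.

Lemma sums_to_point (y : mi) (c : C) : sums_to (fun x => if x == y then c else 0) c.
Proof.
have := @sums_to_finite (fun x => if x == y then c else 0) (\sum_j y j).+1.
rewrite box_sum_point ?mem_box_self //; apply.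
by move=> x; case: eqP => // -> ; rewrite mem_box_self.
Qed.

Lemma box_sum_le_lim (G : mi -> R) s : (forall x, 0 <= G x) ->
  cvgR (fun N => \sum_(x <- box N) G x) s -> forall N, \sum_(x <- box N) G x <= s.
Proof.
move=> G0 Hl N; apply: (cvgR_le (cvgR_cst _) Hl).
by exists N => N' HN; apply: ler_box_sum.
Qed.

Lemma summable_le (F G : mi -> C) :
  summable G -> (forall x, rnorm (F x) <= rnorm (G x)) -> summable F.
Proof.
move=> [M HM] H; exists M => N; apply: le_trans (HM N); apply: ler_sum => x _; exact: H.
Qed.

Lemma summable_bound_ge0 (F : mi -> C) :
  summable F -> exists K, 0 <= K /\ forall N, \sum_(x <- box N) rnorm (F x) <= K.
Proof.
move=> [M HM]; exists M; split => //; apply: le_trans (HM 0%N).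
by apply: sumr_ge0 => x _; apply: rnorm_ge0.
Qed.

Lemma summable_norm (F : mi -> C) S : sums_to (fun x => `|F x|) S -> summable F.
Proof. by move=> [[M HM] _]; exists M => N; have := HM N; under eq_bigr do rewrite rnorm_norm. Qed.

End Summable.

Section CoefUnique.
Variable R : realType.
Local Notation C := R[i].
Variable k : nat.
Local Notation mi := {ffun 'I_k -> nat}.
Local Notation box := (@box k).
Local Notation sums_to := (@sums_to R k).
Local Notation summable := (@summable R k).

Lemma rnorm_mono_le1 (z : 'I_k -> C) (x : mi) : (forall j, rnorm (z j) <= 1) ->
  rnorm (mono z x) <= 1.
Proof.
move=> H; rewrite /mono rnorm_prod; apply: prodr_ile1 => j _.
rewrite rnormX exprn_ge0 ?rnorm_ge0 //=; apply: exprn_ile1; [exact: rnorm_ge0 | exact: H].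
Qed.

Lemma monoD (z : 'I_k -> C) (x y : mi) : mono z (x + y) = mono z x * mono z y.
Proof.
by rewrite /mono -big_split /=; apply: eq_bigr => j _; rewrite ffunE exprD.
Qed.

Definition setz (z : 'I_k -> C) (j0 : 'I_k) (w : C) := fun j => if j == j0 then w else z j.

Lemma mono_setz (z : 'I_k -> C) j0 w (x : mi) : z j0 = 1 ->
  mono (setz z j0 w) x = w ^+ x j0 * mono z x.
Proof.
move=> z1; rewrite /mono (bigD1 j0) // [in RHS](bigD1 j0) //= /setz eqxx z1 expr1n mul1r.
congr (_ * _); apply: eq_bigr => j /negPf ->; done.
Qed.

Lemma sum_split_levels (s : seq mi) (c : mi -> C) (e : mi -> nat) (t : C) n :
  \sum_(x <- s) c x * t ^+ e x =
  \sum_(m < n) t ^+ m * \sum_(x <- s) (if e x == m then c x else 0)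
  + \sum_(x <- s) (if (n <= e x)%N then c x * t ^+ e x else 0).
Proof.
elim: n => [|n IH]; first by rewrite big_ord0 add0r.
rewrite IH big_ord_recr /= -addrA; congr (_ + _).
rewrite mulr_sumr -big_split /=; apply: eq_bigr => x _.
by case: ltngtP => h; rewrite ?mulr0 ?add0r ?addr0 // h mulrC.
Qed.

(* Strong induction on n: t^n times the n-th level is the whole series minus the
   lower levels, which tend to 0, minus a tail of size at most t^(n+1) K. *)
Lemma level_sets_sum0 (c : mi -> C) (e : mi -> nat) : summable c ->
  (forall t : R, 0 < t -> t < 1 -> sums_to (fun x => c x * t%:C ^+ e x) 0) ->
  forall n, sums_to (fun x => if e x == n then c x else 0) 0.
Proof.
move=> Hc Ht; have [K [K0 HK]] := summable_bound_ge0 Hc.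
elim/ltn_ind => n IH; split.
  by apply: summable_le Hc _ => x; case: ifP => _; rewrite ?rnorm0 ?rnorm_ge0.
move=> eps eps0.
pose t := eps / (eps + 2 * K + 2).
have den0 : 0 < eps + 2 * K + 2 by lra.
have t0 : 0 < t by apply: divr_gt0.
have t1 : t < 1 by rewrite /t ltr_pdivrMr //; lra.
have tK : t * K <= eps / 2.
  rewrite /t mulrAC ler_pdivrMr // mulrAC ler_pdivlMr //; nra.
have tn0 : 0 < t ^+ n by apply: exprn_gt0.
pose B m N := \sum_(x <- box N) (if e x == m then c x else 0).
have [_ Hl] := Ht t t0 t1.
have Hm : forall m, (m < n)%N -> cvgC (B m) 0 by move=> m /IH [].
pose D N := \sum_(x <- box N) c x * t%:C ^+ e x - \sum_(m < n) t%:C ^+ m * B m N.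
have HD : cvgC D 0.
  have H' : forall m : 'I_n, cvgC (fun N => t%:C ^+ m * B m N) 0.
    move=> m; have := cvgCMl (t%:C ^+ m) (Hm m (ltn_ord m)); by rewrite mulr0.
  have := cvgCB Hl (cvgC_sum (index_enum 'I_n) H'); by rewrite big1 // subr0.
pose T N := \sum_(x <- box N) (if (n < e x)%N then c x * t%:C ^+ e x else 0).
have tX m : rnorm (t%:C ^+ m) = t ^+ m.
  by rewrite rnormX rnorm_real ger0_norm //; apply: ltW.
have HT N : rnorm (T N) <= t ^+ n.+1 * K.
  apply: le_trans (rnorm_sum _ _ _) _.
  apply: le_trans (_ : \sum_(x <- box N) t ^+ n.+1 * rnorm (c x) <= _); last first.
    by rewrite -mulr_sumr; apply: ler_wpM2l; [apply: exprn_ge0; apply: ltW | apply: HK].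
  apply: ler_sum => x _; case: ltnP => h; last first.
    by rewrite rnorm0; apply: mulr_ge0; [apply: exprn_ge0; apply: ltW | apply: rnorm_ge0].
  rewrite rnormM tX mulrC; apply: ler_wpM2r; first exact: rnorm_ge0.
  by apply: ler_wiXn2l => //; apply: ltW.
have Hid N : t%:C ^+ n * B n N = D N - T N.
  by rewrite /D /B /T (sum_split_levels _ _ _ _ n.+1) big_ord_recr /=; ring.
have e2 : 0 < t ^+ n * (eps / 2) by apply: mulr_gt0 => //; lra.
have [N0 HN0] := HD _ e2.
exists N0 => N HN; rewrite subr0.
have h1 : rnorm (t%:C ^+ n * B n N) <= rnorm (D N) + rnorm (T N).
  by rewrite Hid; apply: le_trans (rnormD _ _) _; rewrite rnormN.
rewrite rnormM tX in h1.
have := HN0 N HN; rewrite subr0 => h2.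
have := HT N; rewrite exprS => h3.
have h4 : t ^+ n * rnorm (B n N) < t ^+ n * (eps / 2 + t * K).
  nra.
rewrite ltr_pM2l // in h4; lra.
Qed.

Definition agree_below m (x y : mi) := [forall j : 'I_k, (j < m)%N ==> (x j == y j)].

Lemma agree_below0 (x y : mi) : agree_below 0 x y.
Proof. by apply/forallP. Qed.

Lemma agree_belowS m (hm : (m < k)%N) (x y : mi) :
  agree_below m.+1 x y = agree_below m x y && (x (Ordinal hm) == y (Ordinal hm)).
Proof.
apply/forallP/andP.
  move=> H; split; last by have := H (Ordinal hm); rewrite /= ltnSn.
  by apply/forallP => j; apply/implyP => hj; have := H j; rewrite ltnS ltnW.
move=> [/forallP H1 H2] j; apply/implyP; rewrite ltnS leq_eqVlt => /orP[/eqP hj|hj].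
  by have -> : j = Ordinal hm by apply: val_inj.
by have := H1 j; rewrite hj.
Qed.

Lemma agree_below_k (x y : mi) : agree_below k x y = (x == y).
Proof.
apply/forallP/eqP => [Hj|->]; last by move=> j; rewrite eqxx implybT.
by apply/ffunP => j; have := Hj j; rewrite ltn_ord /= => /eqP.
Qed.

(* Induction on m: freezing the coordinates z_j (m < j) and putting z_m = t
   in (0, 1) turns the series into a power series in t, to which
   [level_sets_sum0] applies. *)
Lemma prefix_slices_sum0 (d : mi -> C) : summable d ->
  (forall z, (forall j, rnorm (z j) < 1) -> sums_to (fun x => d x * mono z x) 0) ->
  forall m, (m <= k)%N -> forall (y : mi) (z : 'I_k -> C),
    (forall j : 'I_k, (j < m)%N -> z j = 1) ->
    (forall j : 'I_k, (m <= j)%N -> rnorm (z j) < 1) ->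
    sums_to (fun x => (if agree_below m x y then d x else 0) * mono z x) 0.
Proof.
move=> Hd H; elim=> [|m IH] hm y z z1 zlt.
  under eq_sums_to do rewrite agree_below0.
  by apply: H => j; apply: zlt.
pose jm := Ordinal hm.
pose c (x : mi) := (if agree_below m x y then d x else 0) * mono z x.
have zle j : rnorm (z j) <= 1.
  by case: (ltnP j m.+1) => hj; [rewrite z1 // rnorm1 | apply: ltW; apply: zlt].
have Hc : summable c.
  apply: summable_le Hd _ => x; rewrite /c rnormM.
  have := rnorm_mono_le1 x zle; have := rnorm_ge0 (mono z x).
  case: ifP => _; last by move=> *; rewrite rnorm0 mul0r rnorm_ge0.
  have := rnorm_ge0 (d x); nra.
have Ht t : 0 < t -> t < 1 -> sums_to (fun x => c x * t%:C ^+ x jm) 0.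
  move=> t0 t1; have := IH (ltnW hm) y (setz z jm t%:C).
  have zjm : z jm = 1 by apply: z1; rewrite /= ltnSn.
  under eq_sums_to do rewrite mono_setz // mulrCA mulrC.
  apply.
    move=> j hj; rewrite /setz; case: eqP => hj'; first by rewrite hj' /= ltnn in hj.
    by apply: z1; rewrite ltnS ltnW.
  move=> j hj; rewrite /setz; case: eqP => hj'; first by rewrite rnorm_real ger0_norm ?ltW.
  apply: zlt; rewrite leq_eqVlt in hj; case/orP: hj => // /eqP hj.
  by exfalso; apply: hj'; apply: val_inj.
have := level_sets_sum0 Hc Ht (y jm).
congr sums_to; apply: functional_extensionality => x; rewrite (agree_belowS hm) /c.
by case: (x jm == y jm); case: agree_below; rewrite ?mul0r.
Qed.

Lemma coef_eq0 (d : mi -> C) : summable d ->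
  (forall z, (forall j, rnorm (z j) < 1) -> sums_to (fun x => d x * mono z x) 0) ->
  forall y, d y = 0.
Proof.
move=> Hd H y.
have := prefix_slices_sum0 Hd H (leqnn k) y (z := fun _ => 1) (fun _ _ => erefl).
have mono1 x : mono (fun _ => 1 : C) x = 1 by rewrite /mono big1 // => j _; rewrite expr1n.
under eq_sums_to do rewrite mono1 mulr1 agree_below_k.
move=> h; apply: (sums_to_unique (sums_to_point y (d y))).
have -> : (fun x => if x == y then d y else 0) = (fun x => if x == y then d x else 0).
  by apply: functional_extensionality => x; case: eqP => // ->.
by apply: h => j; rewrite leqNgt ltn_ord.
Qed.

Lemma coef_unique (a b : mi -> C) (f : ('I_k -> C) -> C) : summable a -> summable b ->
  (forall z, (forall j, rnorm (z j) < 1) -> sums_to (fun x => a x * mono z x) (f z)) ->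
  (forall z, (forall j, rnorm (z j) < 1) -> sums_to (fun x => b x * mono z x) (f z)) ->
  forall x, a x = b x.
Proof.
move=> Ha Hb HA HB x; apply/eqP; rewrite -subr_eq0; apply/eqP.
apply: (coef_eq0 (d := fun x => a x - b x)) => [|z hz].
  by apply: summableD => //; apply: summable_le Hb _ => y; rewrite rnormN.
have := sums_toB (HA z hz) (HB z hz); rewrite subrr.
by under eq_sums_to do rewrite -mulrBl.
Qed.

End CoefUnique.

Section MultiIndexOrder.
Variable k : nat.
Local Notation mi := {ffun 'I_k -> nat}.
Local Notation box := (@box k).

Definition le_mi (x y : mi) := [forall j, x j <= y j]%N.
Definition sub_mi (y x : mi) : mi := [ffun j => y j - x j]%N.
Definition below (y : mi) := box (\sum_j y j).+1.

Lemma le_mi_box (x y : mi) N : le_mi x y -> y \in box N -> x \in box N.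
Proof.
move=> /forallP H /mem_boxP Hy; apply/mem_boxP => j; exact: leq_ltn_trans (H j) (Hy j).
Qed.

Lemma le_mi_below (x y : mi) : le_mi x y -> x \in below y.
Proof. move=> H; apply: le_mi_box H _; exact: mem_box_self. Qed.

Lemma add_sub_mi (x y : mi) : le_mi x y -> x + sub_mi y x = y.
Proof.
move=> /forallP H; apply/ffunP => j; rewrite /sub_mi !ffunE; apply: subnKC; exact: H.
Qed.

Lemma addKmi (x w : mi) : sub_mi (x + w) x = w.
Proof. by apply/ffunP => j; rewrite /sub_mi !ffunE addKn. Qed.

Lemma le_mi_add (x w : mi) : le_mi x (x + w).
Proof. by apply/forallP => j; rewrite ffunE leq_addr. Qed.

Lemma conv_reindex (V : nmodType) (h : mi -> mi -> V) N :
  \sum_(y <- box N) \sum_(x <- below y | le_mi x y) h x (sub_mi y x)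
  = \sum_(x <- box N) \sum_(w <- box N | x + w \in box N) h x w.
Proof.
rewrite big_seq.
rewrite (eq_bigr (fun y => \sum_(x <- box N | le_mi x y) h x (sub_mi y x))); last first.
  move=> y yN; apply: eq_big_uniq_mem; try exact: box_uniq.
  by move=> x hx; rewrite le_mi_below // (le_mi_box hx yN).
rewrite -big_seq.
under eq_bigr do rewrite big_mkcond.
rewrite exchange_big /=; apply: eq_bigr => x _; rewrite -big_mkcond /=.
rewrite -big_filter.
transitivity (\sum_(y <- map (fun w => x + w) [seq w <- box N | x + w \in box N])
    h x (sub_mi y x)); last first.
  by rewrite big_map big_filter; apply: eq_bigr => w _; rewrite addKmi.
apply: perm_big; apply: uniq_perm.
- by apply: filter_uniq; apply: box_uniq.
- rewrite map_inj_uniq; first by apply: filter_uniq; apply: box_uniq.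
  move=> w1 w2 /ffunP H; apply/ffunP => j; have := H j; rewrite !ffunE; exact: addnI.
move=> y; rewrite mem_filter; apply/andP/mapP.
  move=> [hxy yN]; exists (sub_mi y x); last by rewrite add_sub_mi.
  rewrite mem_filter add_sub_mi // yN /=.
  apply/mem_boxP => j; rewrite ffunE; apply: leq_ltn_trans (leq_subr _ _) _.
  by move/mem_boxP: yN; apply.
move=> [w]; rewrite mem_filter => /andP[xwN _] ->; split => //; exact: le_mi_add.
Qed.

Lemma box_half_add (x w : mi) N :
  x \in box (N %/ 2) -> w \in box (N %/ 2) -> x + w \in box N.
Proof.
move=> /mem_boxP hx /mem_boxP hw; apply/mem_boxP => j; rewrite ffunE.
suff : (x j + w j < N)%N by [].
have := hx j; have := hw j; have := leq_trunc_div N 2; lia.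
Qed.

End MultiIndexOrder.

Section Convolution.
Variable R : realType.
Local Notation C := R[i].
Variable k : nat.
Local Notation mi := {ffun 'I_k -> nat}.
Local Notation box := (@box k).
Local Notation below := (@below k).
Local Notation sums_to := (@sums_to R k).

Definition conv (p q : mi -> C) (y : mi) :=
  \sum_(x <- below y | le_mi x y) p x * q (sub_mi y x).

Lemma rnorm_conv_sum (p q : mi -> C) N :
  \sum_(y <- box N) rnorm (conv p q y) <=
  \sum_(x <- box N) \sum_(w <- box N | x + w \in box N) rnorm (p x) * rnorm (q w).
Proof.
rewrite -(conv_reindex (fun x w => rnorm (p x) * rnorm (q w))).
apply: ler_sum => y _; apply: le_trans (rnorm_sum _ _ _) _.
by apply: ler_sum => x _; rewrite rnormM.
Qed.

Lemma ler_box_sum_pairs (F G : mi -> R) N : (forall x, 0 <= F x) -> (forall x, 0 <= G x) ->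
  \sum_(x <- box N) \sum_(w <- box N | x + w \in box N) F x * G w <=
  (\sum_(x <- box N) F x) * (\sum_(w <- box N) G w).
Proof.
move=> F0 G0; rewrite mulr_suml; apply: ler_sum => x _; rewrite mulr_sumr.
rewrite [X in _ <= X](bigID (fun w => x + w \in box N)) /= lerDl.
by apply: sumr_ge0 => w _; apply: mulr_ge0.
Qed.

Lemma box_sum_prod (V : comPzRingType) (F G : mi -> V) M N : (M <= N)%N ->
  (\sum_(x <- box M) F x) * (\sum_(w <- box M) G w) =
  \sum_(x <- box N) \sum_(w <- box N) (if (x \in box M) && (w \in box M) then F x * G w else 0).
Proof.
move=> MN; rewrite mulr_suml -(big_mem_subseq _ (box_uniq N) (box_uniq M)); last first.
  by move=> x; apply: box_mono.
rewrite big_mkcond; apply: eq_bigr => x _; case: (x \in box M) => /=; last first.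
  by rewrite big1.
rewrite mulr_sumr -(big_mem_subseq _ (box_uniq N) (box_uniq M)); last first.
  by move=> w; apply: box_mono.
by rewrite big_mkcond.
Qed.

Lemma rnorm_conv_le (p q : mi -> C) N :
  \sum_(y <- box N) rnorm (conv p q y) <=
  (\sum_(x <- box N) rnorm (p x)) * (\sum_(w <- box N) rnorm (q w)).
Proof.
by apply: le_trans (rnorm_conv_sum p q N) _; apply: ler_box_sum_pairs => x; apply: rnorm_ge0.
Qed.

Lemma conv_mono_box_sum (p q : mi -> C) (z : 'I_k -> C) N :
  \sum_(y <- box N) conv p q y * mono z y =
  \sum_(x <- box N) \sum_(w <- box N | x + w \in box N) (p x * mono z x) * (q w * mono z w).
Proof.
rewrite -conv_reindex; apply: eq_bigr => y _; rewrite /conv mulr_suml.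
apply: eq_bigr => x hx; have := monoD z x (sub_mi y x); rewrite add_sub_mi // => ->.
ring.
Qed.

(* The partial sums of the Cauchy product over box N contain the product of the
   partial sums over box (N/2); the remaining terms are dominated by the
   corresponding terms of the product of the l^1 norms. *)
Lemma conv_box_sum_half (p q : mi -> C) (z : 'I_k -> C) N :
  (forall j, rnorm (z j) <= 1) ->
  rnorm (\sum_(y <- box N) conv p q y * mono z y -
    (\sum_(x <- box (N %/ 2)) p x * mono z x) * (\sum_(w <- box (N %/ 2)) q w * mono z w)) <=
  (\sum_(x <- box N) rnorm (p x)) * (\sum_(w <- box N) rnorm (q w)) -
  (\sum_(x <- box (N %/ 2)) rnorm (p x)) * (\sum_(w <- box (N %/ 2)) rnorm (q w)).
Proof.
move=> z1; have MN : (N %/ 2 <= N)%N by apply: leq_div.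
rewrite conv_mono_box_sum !(box_sum_prod _ _ MN) (box_sum_prod _ _ (leqnn N)).
rewrite -[in X in _ <= X]sumrB.
apply: le_trans (rnorm_sumB _ _ _) _.
rewrite big_seq [X in _ <= X]big_seq; apply: ler_sum => x xN.
rewrite -sumrB big_mkcond /=; apply: le_trans (rnorm_sumB _ _ _) _.
rewrite big_seq [X in _ <= X]big_seq; apply: ler_sum => w wN; rewrite xN wN /=.
have pq0 : 0 <= rnorm (p x) * rnorm (q w) by rewrite mulr_ge0 ?rnorm_ge0.
have hb : rnorm (p x * mono z x * (q w * mono z w)) <= rnorm (p x) * rnorm (q w).
  rewrite !rnormM mulrACA; apply: ler_piMr => //.
  by apply: mulr_ile1; rewrite ?rnorm_ge0 ?rnorm_mono_le1.
case hx: (x \in box (N %/ 2)); case hw: (w \in box (N %/ 2)) => /=.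
  by rewrite box_half_add // !subrr rnorm0.
all: by case: (x + w \in box N); rewrite ?subr0 ?rnorm0.
Qed.

Lemma sums_to_conv (p q : mi -> C) (z : 'I_k -> C) P Q sp sq :
  (forall j, rnorm (z j) <= 1) ->
  sums_to (fun x => p x * mono z x) P -> sums_to (fun x => q x * mono z x) Q ->
  cvgR (fun N => \sum_(x <- box N) rnorm (p x)) sp ->
  cvgR (fun N => \sum_(x <- box N) rnorm (q x)) sq ->
  sums_to (fun y => conv p q y * mono z y) (P * Q).
Proof.
move=> z1 [_ HP] [_ HQ] Hp Hq.
have p0 x : 0 <= rnorm (p x) by apply: rnorm_ge0.
have q0 x : 0 <= rnorm (q x) by apply: rnorm_ge0.
split.
  exists (sp * sq) => N; apply: le_trans (_ : \sum_(y <- box N) rnorm (conv p q y) <= _).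
    apply: ler_sum => y _; rewrite rnormM; have := rnorm_mono_le1 y z1.
    have := rnorm_ge0 (conv p q y); have := rnorm_ge0 (mono z y); nra.
  apply: le_trans (rnorm_conv_le p q N) _.
  by apply: ler_pM; rewrite ?sumr_ge0 ?(box_sum_le_lim p0 Hp) ?(box_sum_le_lim q0 Hq).
apply: (cvgC_squeeze (cvgCM (cvgC_half HP) (cvgC_half HQ)) _
  (fun N => conv_box_sum_half p q N z1)).
apply/cvgR_cvgC; rewrite (_ : 0%:C = sp%:C * sq%:C - sp%:C * sq%:C); last by rewrite subrr.
move/cvgR_cvgC: Hp => Hp; move/cvgR_cvgC: Hq => Hq.
apply: (cvgC_eventually (cvgCB (cvgCM Hp Hq) (cvgC_half (cvgCM Hp Hq)))).
by exists 0%N => N _; rewrite rmorphB !rmorphM.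
Qed.

Lemma rnorm_conv_sum_gap (p q : mi -> C) s t N :
  s + t \in box N -> conv p q (s + t) = 0 ->
  \sum_(y <- box N) rnorm (conv p q y) <=
  (\sum_(x <- box N) rnorm (p x)) * (\sum_(w <- box N) rnorm (q w))
  - rnorm (p s) * rnorm (q t).
Proof.
move=> stN c0.
have pq0 x w : 0 <= rnorm (p x) * rnorm (q w) by rewrite mulr_ge0 ?rnorm_ge0.
apply: le_trans (_ : _ <= \sum_(y <- box N) \sum_(x <- below y | le_mi x y)
    rnorm (p x) * rnorm (q (sub_mi y x)) - rnorm (p s) * rnorm (q t)) _; last first.
  rewrite lerD2r (conv_reindex (fun x w => rnorm (p x) * rnorm (q w))).
  by apply: ler_box_sum_pairs => x; apply: rnorm_ge0.
rewrite (bigD1_seq (s + t)) ?box_uniq //= [X in _ <= X - _](bigD1_seq (s + t)) ?box_uniq //=.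
rewrite c0 rnorm0 add0r.
have h1 : \sum_(y <- box N | y != s + t) rnorm (conv p q y) <=
    \sum_(y <- box N | y != s + t) \sum_(x <- below y | le_mi x y)
      rnorm (p x) * rnorm (q (sub_mi y x)).
  apply: ler_sum => y _; apply: le_trans (rnorm_sum _ _ _) _.
  by apply: ler_sum => x _; rewrite rnormM.
have h2 : rnorm (p s) * rnorm (q t) <=
    \sum_(x <- below (s + t) | le_mi x (s + t)) rnorm (p x) * rnorm (q (sub_mi (s + t) x)).
  rewrite -big_filter (bigD1_seq s) /=; first last.
  - by apply: filter_uniq; apply: box_uniq.
  - by rewrite mem_filter le_mi_add le_mi_below // le_mi_add.
  by rewrite addKmi lerDl; apply: sumr_ge0 => x _.
lra.
Qed.

Lemma conv_support_add (p q : mi -> C) s t :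
  cvgR (fun N => \sum_(x <- box N) rnorm (p x)) 1 ->
  cvgR (fun N => \sum_(x <- box N) rnorm (q x)) 1 ->
  cvgR (fun N => \sum_(y <- box N) rnorm (conv p q y)) 1 ->
  p s != 0 -> q t != 0 -> conv p q (s + t) != 0.
Proof.
move=> Hp Hq Hc ps qt; apply/negP => /eqP c0.
have p0 x : 0 <= rnorm (p x) by apply: rnorm_ge0.
have q0 x : 0 <= rnorm (q x) by apply: rnorm_ge0.
have Hpos : 0 < rnorm (p s) * rnorm (q t).
  by apply: mulr_gt0; rewrite lt_def rnorm_eq0 ?ps ?qt rnorm_ge0.
have key N : ((\sum_(j < k) (s + t)%R j).+1 <= N)%N ->
    \sum_(y <- box N) rnorm (conv p q y) <= 1 - rnorm (p s) * rnorm (q t).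
  move=> hN; have stN := box_mono hN (mem_box_self (s + t)).
  apply: le_trans (rnorm_conv_sum_gap stN c0) _; rewrite lerD2r -[1]mulr1.
  by apply: ler_pM; rewrite ?sumr_ge0 ?(box_sum_le_lim p0 Hp) ?(box_sum_le_lim q0 Hq).
have := cvgR_le Hc (cvgR_cst (1 - rnorm (p s) * rnorm (q t))) (ex_intro _ _ key).
lra.
Qed.

End Convolution.

Section DisjointSupport.
Variable R : realType.
Local Notation C := R[i].
Variable k : nat.
Local Notation mi := {ffun 'I_k -> nat}.
Local Notation box := (@box k).

Lemma disjoint_support (p q : mi -> C) x :
  cvgR (fun N => \sum_(y <- box N) rnorm (p y)) 1 ->
  cvgR (fun N => \sum_(y <- box N) rnorm (q y)) 1 ->
  (forall l : C, rnorm l = 1 -> cvgR (fun N => \sum_(y <- box N) rnorm (p y + l * q y)) 2) ->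
  p x = 0 \/ q x = 0.
Proof.
move=> Hp Hq Hl.
case: (eqVneq (p x) 0) => [->|px]; first by left.
case: (eqVneq (q x) 0) => [->|qx]; first by right.
exfalso.
pose a := rnorm (p x); pose b := rnorm (q x).
have a0 : 0 < a by rewrite lt_def rnorm_eq0 px rnorm_ge0.
have b0 : 0 < b by rewrite lt_def rnorm_eq0 qx rnorm_ge0.
(* With this unimodular l, p x and l q x point in opposite directions. *)
pose l := - (p x / q x) * (b / a)%:C.
have hl : rnorm l = 1.
  rewrite /l rnormM rnormN rnormM rnormV // rnorm_real ger0_norm; last first.
    by apply: divr_ge0; apply: ltW.
  rewrite -/a -/b; field; lra.
have hpl : rnorm (p x + l * q x) = `|a - b|.
  have -> : p x + l * q x = p x * (1 - b / a)%:C.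
    have ha : a%:C != 0 by rewrite (inj_eq (@complexI R)); apply: lt0r_neq0.
    rewrite /l rmorphB rmorph1 /=; field; rewrite qx andbT; exact: ha.
  rewrite rnormM rnorm_real -/a.
  have -> : a * `|1 - b / a| = `|a * (1 - b / a)| by rewrite normrM (ger0_norm (ltW a0)).
  by rewrite mulrBr mulr1 [a * _]mulrC divfK // lt0r_neq0.
have p0 y : 0 <= rnorm (p y) by apply: rnorm_ge0.
have q0 y : 0 <= rnorm (q y) by apply: rnorm_ge0.
have key : forall N, ((\sum_j x j).+1 <= N)%N ->
    \sum_(y <- box N) rnorm (p y + l * q y) <= 2 - (a + b - `|a - b|).
  move=> N hN; have xN : x \in box N by apply: (box_mono hN); apply: mem_box_self.
  rewrite (bigD1_seq x) ?box_uniq //= hpl.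
  have h1 := box_sum_le_lim p0 Hp N; have h2 := box_sum_le_lim q0 Hq N.
  rewrite (bigD1_seq x) ?box_uniq //= -/a in h1.
  rewrite (bigD1_seq x) ?box_uniq //= -/b in h2.
  have h3 : \sum_(y <- box N | y != x) rnorm (p y + l * q y) <=
      \sum_(y <- box N | y != x) rnorm (p y) + \sum_(y <- box N | y != x) rnorm (q y).
    rewrite -big_split /=; apply: ler_sum => y _; apply: le_trans (rnormD _ _) _.
    by rewrite rnormM hl mul1r.
  lra.
have := cvgR_le (Hl l hl) (cvgR_cst _) (ex_intro _ _ key).
have : `|a - b| < a + b by rewrite ltr_norml; lra.
lra.
Qed.

End DisjointSupport.

Section Pushforward.
Variable R : realType.
Local Notation C := R[i].
Variable k : nat.
Local Notation mi := {ffun 'I_k -> nat}.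
Local Notation box := (@box k).
Local Notation sums_to := (@sums_to R k).

Variable tau : mi -> mi.
Variable bound : mi -> nat.
Hypothesis tau_bound : forall x, x \in box (bound (tau x)).
Hypothesis tau_inj : injective tau.
Hypothesis tau_preimage : forall N, exists L, forall x, tau x \in box N -> x \in box L.
Hypothesis tau_image : forall L, exists N, forall x, x \in box L -> tau x \in box N.

(* [pushforward F y] is the sum of F over the preimage of y, which lies in
   box (bound y). *)
Definition pushforward (V : nmodType) (F : mi -> V) (y : mi) : V :=
  \sum_(x <- box (bound y) | tau x == y) F x.

Lemma pushforward_box_sum (V : nmodType) (F : mi -> V) N L :
  (forall x, tau x \in box N -> x \in box L) ->
  \sum_(y <- box N) pushforward F y = \sum_(x <- box L | tau x \in box N) F x.
Proof.
move=> HL.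
rewrite big_seq (eq_bigr (fun y => \sum_(x <- box L) (if tau x == y then F x else 0))); last first.
  move=> y yN; rewrite /pushforward -big_mkcond /=.
  apply: eq_big_uniq_mem; rewrite ?box_uniq // => x /eqP hx.
  by rewrite -hx tau_bound HL // hx.
rewrite -big_seq exchange_big /= [RHS]big_mkcond /=; apply: eq_bigr => x _.
case: ifP => h.
  rewrite (eq_bigr (fun y => if y == tau x then F x else 0)) ?box_sum_point // => y _.
  by rewrite eq_sym.
rewrite big1_seq // => y /andP[_ yN]; case: eqP => // hy.
by rewrite hy yN in h.
Qed.

Lemma sums_to_pushforward (F : mi -> C) S : sums_to F S -> sums_to (pushforward F) S.
Proof.
move=> Hs; have [[M HM] _] := Hs; split.
  exists M => N; have [L HL] := tau_preimage N.
  apply: le_trans (_ : \sum_(y <- box N) pushforward (fun x => rnorm (F x)) y <= _).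
    by apply: ler_sum => y _; apply: rnorm_sum.
  rewrite (pushforward_box_sum _ HL); apply: le_trans (HM L).
  rewrite [X in _ <= X](bigID (fun x => tau x \in box N)) /= lerDl.
  by apply: sumr_ge0 => x _; apply: rnorm_ge0.
move=> e e0; have [N0 H0] := sums_to_superset Hs e0; have [N1 H1] := tau_image N0.
exists N1 => N HN; have [L HL] := tau_preimage N.
rewrite (pushforward_box_sum _ HL) -big_filter; apply: H0.
  by apply: filter_uniq; apply: box_uniq.
move=> x xN0; rewrite mem_filter; have ix : tau x \in box N.
  by apply: (box_mono HN); apply: H1.
by rewrite ix HL.
Qed.

Lemma norm_pushforward (F : mi -> C) y : `|pushforward F y| = pushforward (fun x => `|F x|) y.
Proof.
rewrite /pushforward -big_filter -[RHS]big_filter.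
case E: [seq x <- box (bound y) | tau x == y] => [|x0 s]; first by rewrite !big_nil normr0.
have u : uniq (x0 :: s) by rewrite -E; apply: filter_uniq; apply: box_uniq.
case: s E u => [|x1 s] E u; first by rewrite !big_seq1.
exfalso.
have h0 : x0 \in [seq x <- box (bound y) | tau x == y] by rewrite E inE eqxx.
have h1 : x1 \in [seq x <- box (bound y) | tau x == y] by rewrite E !inE eqxx orbT.
rewrite !mem_filter in h0 h1; case/andP: h0 => /eqP h0 _; case/andP: h1 => /eqP h1 _.
have e01 : x0 = x1 by apply: tau_inj; rewrite h0 h1.
by move: u; rewrite e01 /= inE eqxx.
Qed.

End Pushforward.

Section AplusCoefficients.
Variable R : realType.
Local Notation C := R[i].
Variable k : nat.
Local Notation mi := {ffun 'I_k -> nat}.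
Local Notation sums_to := (@sums_to R k).
Local Notation summable := (@summable R k).

Definition fun_family (F : mi -> C) := fun al : 'I_k -> nat => F [ffun j => al j].

Lemma fun_familyK (F : mi -> C) : (fun x : mi => fun_family F x) = F.
Proof. by apply: functional_extensionality => x; rewrite /fun_family ffunK. Qed.

Lemma Aplus_rep_fun_family (F : mi -> C) (f : ('I_k -> C) -> C) : summable F ->
  (forall z, (forall j, rnorm (z j) <= 1) -> sums_to (fun x => F x * mono z x) (f z)) ->
  Aplus_rep (fun_family F) f.
Proof.
move=> HF Hr; split; first by apply/abs_summableP; rewrite fun_familyK.
move=> z hz; apply/has_sumP; rewrite /fun_family; under eq_sums_to do rewrite ffunK.
by apply: Hr => j; rewrite -rnorm_le1.
Qed.

Lemma has_sum_norm_fun_family (F : mi -> C) S : sums_to (fun x => `|F x|) S ->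
  has_sum (fun al => `|fun_family F al|) S.
Proof. by move=> H; apply/has_sumP; rewrite /fun_family; under eq_sums_to do rewrite ffunK. Qed.

Lemma Aplus_rep_ffun (a : ('I_k -> nat) -> C) f : Aplus_rep a f ->
  summable (fun x : mi => a x) /\
  forall z, (forall j, rnorm (z j) <= 1) -> sums_to (fun x : mi => a x * mono z x) (f z).
Proof.
move=> [Ha Hr]; split; first by apply/abs_summableP.
move=> z hz; apply: (iffLR (has_sumP (fun al => a al * mono z al) _)).
by apply: Hr => j; rewrite rnorm_le1.
Qed.

Definition dirac (a : mi) (x : mi) : C := if x == a then 1 else 0.

Lemma summable_dirac a : summable (dirac a).
Proof. by have [] := sums_to_point a (1 : C). Qed.

Lemma sums_to_dirac_mono (a : mi) (z : 'I_k -> C) :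
  sums_to (fun x => dirac a x * mono z x) (mono z a).
Proof.
have := sums_to_point a (mono z a); congr sums_to.
by apply: functional_extensionality => x; rewrite /dirac; case: eqP => [->|_];
  rewrite ?mul1r ?mul0r.
Qed.

Lemma sums_to_norm_dirac (a : mi) : sums_to (fun x => `|dirac a x|) 1.
Proof.
have := sums_to_point a (1 : C); congr sums_to.
by apply: functional_extensionality => x; rewrite /dirac; case: eqP; rewrite ?normr1 ?normr0.
Qed.

End AplusCoefficients.

Arguments dirac {R k} a x.
Arguments summable_dirac {R k} a.
Arguments sums_to_norm_dirac {R k} a.
Section MonomialIndex.
Variable k : nat.
Local Notation mi := {ffun 'I_k -> nat}.
Local Notation box := (@box k).

Variable A : 'M[nat]_k.
Hypothesis hdet : \det (map_mx (fun n : nat => n%:Z) A) != 0.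

Definition mulmx_idx (x : mi) : mi := [ffun j => \sum_i x i * A i j]%N.
Definition idx_bound (y : mi) := (\sum_j y j).+1.

Lemma row_has_pos i : exists j, (0 < A i j)%N.
Proof.
apply: NNPP => H; move/negP: hdet; apply; apply/det0P.
exists (\row_l (l == i)%:R).
  apply/eqP => /rowP /(_ i); rewrite !mxE eqxx => /eqP; by rewrite oner_eq0.
apply/rowP => j; rewrite !mxE (bigD1 i) //= big1 ?addr0.
  rewrite !mxE eqxx mul1r; case: (posnP (A i j)) => [->|h] //.
  by exfalso; apply: H; exists j.
by move=> l /negPf hl; rewrite !mxE hl mul0r.
Qed.

Lemma mulmx_idx_ge (x : mi) i : exists j, (x i <= mulmx_idx x j)%N.
Proof.
have [j hj] := row_has_pos i; exists j; rewrite ffunE (bigD1 i) //=.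
apply: leq_trans (leq_addr _ _); rewrite -{1}[x i]muln1; exact: leq_mul.
Qed.

Lemma mem_box_mulmx_idx (x : mi) : x \in box (idx_bound (mulmx_idx x)).
Proof.
apply/mem_boxP => i; have [j hj] := mulmx_idx_ge x i; rewrite /idx_bound ltnS.
apply: leq_trans hj _; rewrite (bigD1 j) //=; exact: leq_addr.
Qed.

Lemma mulmx_idx_preimage N : exists L, forall x : mi, mulmx_idx x \in box N -> x \in box L.
Proof.
exists N => x /mem_boxP H; apply/mem_boxP => i; have [j hj] := mulmx_idx_ge x i.
exact: leq_ltn_trans hj (H j).
Qed.

Lemma mulmx_idx_image L : exists N, forall x : mi, x \in box L -> mulmx_idx x \in box N.
Proof.
exists (L * \sum_i \sum_j A i j).+1 => x /mem_boxP H; apply/mem_boxP => j.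
rewrite ffunE ltnS.
apply: leq_trans (_ : (\sum_i L * A i j <= _)%N).
  by apply: leq_sum => i _; apply: leq_mul => //; apply: ltnW.
rewrite -big_distrr /=; apply: leq_mul => //.
by apply: leq_sum => i _; rewrite (bigD1 j) //= leq_addr.
Qed.

Lemma mulmx_idx_inj : injective mulmx_idx.
Proof.
move=> x y hxy; apply: NNPP => hne; move/negP: hdet; apply; apply/det0P.
exists (\row_l ((x l)%:Z - (y l)%:Z)).
  apply/eqP => /rowP H; apply: hne; apply/ffunP => l.
  by have := H l; rewrite !mxE => /eqP; rewrite subr_eq0 => /eqP [].
apply/rowP => j; rewrite !mxE.
have := congr1 (fun f : mi => f j) hxy; rewrite !ffunE => h.
under eq_bigr do rewrite !mxE mulrBl.
by rewrite sumrB -!(big_morph Posz PoszD (erefl (Posz 0))) h subrr.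
Qed.

End MonomialIndex.

Section MonomialIsometry.
Variable R : realType.
Local Notation C := R[i].
Variable k : nat.
Local Notation mi := {ffun 'I_k -> nat}.
Local Notation sums_to := (@sums_to R k).

Variable A : 'M[nat]_k.
Hypothesis hdet : \det (map_mx (fun n : nat => n%:Z) A) != 0.
Local Notation mulmx_idx := (@mulmx_idx k A).
Variable eps : 'I_k -> C.
Hypothesis heps : forall i, `|eps i| = 1.

Definition monomial_map (z : 'I_k -> C) : 'I_k -> C := fun i => eps i * \prod_j z j ^+ A i j.

Lemma mono_monomial_map z (x : mi) : mono (monomial_map z) x = mono eps x * mono z (mulmx_idx x).
Proof.
rewrite /mono /monomial_map.
under eq_bigr do rewrite exprMn.
rewrite big_split /=; congr (_ * _).
rewrite (eq_bigr (fun i => \prod_j z j ^+ (A i j * x i)%N)); last first.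
  by move=> i _; rewrite -prodrXl; apply: eq_bigr => j _; rewrite exprM.
rewrite exchange_big /=; apply: eq_bigr => j _; rewrite prodrXr ffunE.
by congr (_ ^+ _); apply: eq_bigr => i _; rewrite mulnC.
Qed.

Lemma rnorm_eps i : rnorm (eps i) = 1.
Proof. by apply: (@complexI R); rewrite -norm_rnorm heps. Qed.

Lemma rnorm_mono_eps x : rnorm (mono eps x) = 1.
Proof.
rewrite /mono rnorm_prod big1 // => i _; by rewrite rnormX rnorm_eps expr1n.
Qed.

Lemma monomial_map_closed z :
  (forall j, rnorm (z j) <= 1) -> forall i, rnorm (monomial_map z i) <= 1.
Proof.
move=> hz i; rewrite /monomial_map rnormM rnorm_eps mul1r rnorm_prod; apply: prodr_ile1 => j _.
rewrite rnormX exprn_ge0 ?rnorm_ge0 //=; apply: exprn_ile1; [exact: rnorm_ge0 | exact: hz].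
Qed.

Lemma monomial_isometry (phi : ('I_k -> C) -> 'I_k -> C) :
  (forall z, open_polydisc z -> forall i, phi z i = eps i * \prod_(j < k) z j ^+ A i j) ->
  Cphi_isometry phi.
Proof.
move=> Hphi f g S _ [c /Aplus_rep_ffun [Hcs Hcr]] Hfg [a [/Aplus_rep_ffun [_ Har] Han]].
have push := @sums_to_pushforward R _ _ _ (mem_box_mulmx_idx hdet) (mulmx_idx_preimage hdet)
  (mulmx_idx_image A).
pose b := pushforward mulmx_idx (@idx_bound k) (fun x => a x * mono eps x).
have Hb z : (forall j, rnorm (z j) <= 1) -> sums_to (fun y => b y * mono z y) (f (monomial_map z)).
  move=> hz; have := push _ _ (Har _ (monomial_map_closed hz)); congr sums_to.
  apply: functional_extensionality => y; rewrite /b /pushforward mulr_suml.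
  by apply: eq_bigr => x /eqP <-; rewrite mono_monomial_map mulrA.
have Hbn : sums_to (fun y => `|b y|) S.
  have := push _ _ (iffLR (has_sumP _ _) Han); congr sums_to.
  apply: functional_extensionality => y; rewrite /b (norm_pushforward _ (mulmx_idx_inj hdet)).
  by apply: eq_bigr => x _; rewrite normrM [`|mono _ _|]norm_rnorm rnorm_mono_eps mulr1.
have Hcb (x : mi) : c x = b x.
  apply: (coef_unique Hcs (summable_norm Hbn)) => z hz.
    by apply: Hcr => j; apply: ltW.
  have oz : open_polydisc z by move=> j; rewrite rnorm_lt1.
  rewrite Hfg // (_ : phi z = monomial_map z).
    by apply: Hb => j; apply: ltW.
  by apply: functional_extensionality => i; rewrite Hphi.
exists (fun_family b); split; last exact: has_sum_norm_fun_family.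
apply: Aplus_rep_fun_family (summable_norm Hbn) _ => z hz.
by under eq_sums_to do rewrite -Hcb; apply: Hcr.
Qed.

End MonomialIsometry.

Section NatRelations.
Variable k : nat.
Local Notation mi := {ffun 'I_k -> nat}.

Definition unit_idx (i : 'I_k) : mi := [ffun j => (j == i : nat)].

Lemma coord_sum n (F : 'I_n -> mi) (w : 'I_n -> nat) j :
  (\sum_l F l *+ w l) j = (\sum_l F l j * w l)%N.
Proof. by rewrite sum_ffunE; apply: eq_bigr => l _; rewrite ffunMnE -mulr_natr natn. Qed.

Lemma sum_unit_idx (w : 'I_k -> nat) j : (\sum_l unit_idx l j * w l)%N = w j.
Proof.
rewrite (bigD1 j) //= big1 ?addn0; first by rewrite ffunE eqxx mul1n.
by move=> l hl; rewrite ffunE eq_sym (negPf hl).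
Qed.

Lemma relation_of_coords n (V : 'I_n -> mi) (al be : 'I_n -> nat) :
  (forall j, \sum_l al l * V l j = \sum_l be l * V l j)%N ->
  \sum_l V l *+ al l = \sum_l V l *+ be l.
Proof.
move=> H; apply/ffunP => j; rewrite !coord_sum.
by rewrite (eq_bigr (fun l => al l * V l j)%N) ?H => [|l _]; [apply: eq_bigr => l _|];
  rewrite mulnC.
Qed.

Definition lifts_relations n (c : 'I_n -> 'I_k) (V : 'I_n -> mi) :=
  forall w1 w2 : 'I_n -> nat, \sum_l V l *+ w1 l = \sum_l V l *+ w2 l ->
    \sum_l unit_idx (c l) *+ w1 l = \sum_l unit_idx (c l) *+ w2 l.

Lemma det0_nat_relation n (A : 'M[nat]_n) : \det (map_mx (fun m : nat => m%:Z) A) = 0 ->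
  exists al be : 'I_n -> nat, (exists i, al i != be i) /\
    forall j, (\sum_i al i * A i j = \sum_i be i * A i j)%N.
Proof.
move/eqP/det0P => [v v0 vA].
pose al i := if (0 <= v 0 i) then absz (v 0 i) else 0%N.
pose be i := if (v 0 i < 0) then absz (v 0 i) else 0%N.
have hv i : v 0 i = (al i)%:Z - (be i)%:Z.
  rewrite /al /be; case: (lerP 0 (v 0 i)) => h; first by rewrite gez0_abs // subr0.
  by rewrite ltz0_abs // sub0r opprK.
exists al, be; split.
  apply: NNPP => H; apply: (negP v0); apply/eqP/rowP => j.
  have : al j = be j by apply/eqP; apply: NNPP => h; apply: H; exists j; apply/negP.
  by rewrite mxE hv => ->; rewrite subrr.
move=> j; apply/eqP; rewrite -(eqr_nat int) !natr_sum.
have := congr1 (fun M : 'M[int]_(1,n) => M 0 j) vA; rewrite !mxE => h.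
rewrite -subr_eq0; apply/eqP; rewrite -sumrB; apply: etrans h.
by apply: eq_bigr => i _; rewrite !mxE hv mulrBl !natz !PoszM.
Qed.

Lemma lifts_relations_det (V : 'I_k -> mi) :
  lifts_relations id V -> \det (map_mx (fun n : nat => n%:Z) (\matrix_(i, j) V i j)) != 0.
Proof.
move=> HV; apply/negP => /eqP /det0_nat_relation [al [be [[l0 hl0] Hrel]]].
have E : \sum_l V l *+ al l = \sum_l V l *+ be l.
  by apply: relation_of_coords => j; have := Hrel j; under eq_bigr do rewrite mxE;
    under [in X in _ = X -> _]eq_bigr do rewrite mxE.
have := congr1 (fun f : mi => f l0) (HV _ _ E); rewrite !coord_sum !sum_unit_idx => e.
by rewrite e eqxx in hl0.
Qed.

(* Padding k+1 vectors of N^k with a copy of their j0-th coordinate gives a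
   singular square matrix. *)
Lemma nat_relation_succ (j0 : 'I_k) (V : 'I_k.+1 -> mi) :
  exists al be : 'I_k.+1 -> nat, (exists l, al l != be l) /\
    forall j : 'I_k, (\sum_l al l * V l j = \sum_l be l * V l j)%N.
Proof.
have insubdK (j : 'I_k) : insubd j0 (nat_of_ord j) = j.
  by apply: val_inj; rewrite val_insubd ltn_ord.
pose A : 'M[nat]_k.+1 := \matrix_(l, j) V l (insubd j0 (nat_of_ord j)).
have hd : \det (map_mx (fun m : nat => m%:Z) A) = 0.
  rewrite -det_tr; apply: (@determinant_alternate _ _ _ (widen_ord (leqnSn k) j0) ord_max).
    by rewrite -(inj_eq val_inj) /= neq_ltn ltn_ord.
  move=> l; rewrite !mxE; congr (Posz (V l _)); apply: val_inj.
  by rewrite !val_insubd /= ltn_ord ltnn.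
have [al [be [H1 H2]]] := det0_nat_relation hd.
exists al, be; split => // j; have := H2 (widen_ord (leqnSn k) j).
by rewrite /A; under eq_bigr do rewrite mxE /= insubdK;
  under [X in _ = X -> _]eq_bigr do rewrite mxE /= insubdK.
Qed.

Lemma nat_pair_cancel (a1 a2 b1 b2 x y : nat) :
  (a1 * x + a2 * y = b1 * x + b2 * y)%N -> (a1 + a2 = b1 + b2)%N ->
  a1 != b1 \/ a2 != b2 -> y = x.
Proof. by move=> h1 h2 [/eqP|/eqP] h3; nia. Qed.

(* The family sel_1, ..., sel_k, t indexed by 'I_k.+1, with t in position
   ord_max, sitting over the coordinates 1, ..., k, i. *)
Lemma lifts_relations_eq (i : 'I_k) (sel : 'I_k -> mi) (t : mi) :
  lifts_relations (fun l : 'I_k.+1 => if unlift ord_max l is Some j then j else i)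
                  (fun l => if unlift ord_max l is Some j then sel j else t) ->
  t = sel i.
Proof.
set c := fun l => _; set V := fun l => _; move=> HV.
have [al [be [[l0 hl0] Hrel]]] := nat_relation_succ i V.
have E := HV al be (relation_of_coords Hrel).
pose li j : 'I_k.+1 := lift ord_max j.
have split (F : 'I_k.+1 -> nat) : (\sum_l F l = \sum_j F (li j) + F ord_max)%N.
  by rewrite big_ord_recr /=; congr (_ + _); apply: eq_bigr => j _; congr F;
    apply: val_inj; rewrite /= /bump leqNgt ltn_ord.
have cE j : c (li j) = j by rewrite /c /li liftK.
have VE j : V (li j) = sel j by rewrite /V /li liftK.
have cmax : c ord_max = i by rewrite /c unlift_none.
have Vmax : V ord_max = t by rewrite /V unlift_none.
have Ej j : (al (li j) + (j == i) * al ord_max = be (li j) + (j == i) * be ord_max)%N.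
  have := congr1 (fun f : mi => f j) E.
  rewrite !coord_sum !split cmax /= ffunE.
  by under eq_bigr do rewrite cE; under [in X in _ = X -> _]eq_bigr do rewrite cE;
    rewrite !sum_unit_idx.
have hA j : j != i -> al (li j) = be (li j).
  by move=> /negPf ji; have := Ej j; rewrite ji !mul0n !addn0.
have hS : (al (li i) + al ord_max = be (li i) + be ord_max)%N.
  by have := Ej i; rewrite eqxx !mul1n.
have hC : al (li i) != be (li i) \/ al ord_max != be ord_max.
  case: (unliftP ord_max l0) hl0 => [j ->|->] hl0; last by right.
  by case: (eqVneq j i) => [<-|/hA ji]; [left | rewrite ji eqxx in hl0].
apply/ffunP => x; have := Hrel x; rewrite !split Vmax.
rewrite (bigD1 i) //= [in X in _ = X -> _](bigD1 i) //= !VE.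
rewrite (eq_bigr (fun j => be (li j) * V (li j) x)%N) => [h|j /hA -> //].
by apply: nat_pair_cancel hS hC; move: h => /=; lia.
Qed.

End NatRelations.

Section CoefficientsOfPowers.
Variable R : realType.
Local Notation C := R[i].
Variable k : nat.
Local Notation mi := {ffun 'I_k -> nat}.
Local Notation box := (@box k).
Local Notation sums_to := (@sums_to R k).
Local Notation summable := (@summable R k).
Local Notation unit_idx := (@unit_idx k).

Variable phi : ('I_k -> C) -> ('I_k -> C).
Hypothesis Hmap : Cphi_maps_Aplus phi.
Hypothesis Hiso : Cphi_isometry phi.

Lemma isometry_coef (F : mi -> C) (f : ('I_k -> C) -> C) (S : C) : summable F ->
  (forall z, (forall j, rnorm (z j) <= 1) -> sums_to (fun x => F x * mono z x) (f z)) ->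
  sums_to (fun x => `|F x|) S ->
  exists b : mi -> C, summable b /\
    (forall z, (forall j, rnorm (z j) < 1) -> sums_to (fun x => b x * mono z x) (f (phi z))) /\
    sums_to (fun x => `|b x|) S.
Proof.
move=> HF Hr Hn.
have rf := Aplus_rep_fun_family HF Hr.
have inf : in_Aplus f by exists (fun_family F).
have [g [ing Hg]] := Hmap inf.
have Hnf : Aplus_norm_is f S.
  by exists (fun_family F); split => //; apply: has_sum_norm_fun_family.
have [b0 [/Aplus_rep_ffun [h1 h2] Hb0n]] := Hiso inf ing Hg Hnf.
exists (fun x : mi => b0 x); split => //; split.
  move=> z hz; rewrite -Hg; last by move=> j; rewrite rnorm_lt1.
  by apply: h2 => j; apply: ltW.
exact: (iffLR (has_sumP (fun al => `|b0 al|) _)).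
Qed.

Definition coef_power (a : mi) (r : mi -> C) :=
  summable r /\
  forall z, (forall j, rnorm (z j) < 1) -> sums_to (fun x => r x * mono z x) (mono (phi z) a).
Definition norm1 (r : mi -> C) := cvgR (fun N => \sum_(x <- box N) rnorm (r x)) 1.

Lemma coef_power_unique a r1 r2 : coef_power a r1 -> coef_power a r2 -> forall x, r1 x = r2 x.
Proof. by move=> [h1 H1] [h2 H2]; apply: coef_unique h1 h2 H1 H2. Qed.

Lemma exists_coef_power a : exists r, coef_power a r /\ norm1 r.
Proof.
have [b [hb [Hb /(@sums_to_normP R k b 1) [_ Hbn]]]] :=
  isometry_coef (summable_dirac a) (fun z _ => sums_to_dirac_mono a z)
    (sums_to_norm_dirac a).
by exists b.
Qed.

Lemma summable_conv (p q : mi -> C) : norm1 p -> norm1 q -> summable (conv p q).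
Proof.
move=> Hp Hq; exists 1 => N; apply: le_trans (rnorm_conv_le p q N) _.
have p0 x : 0 <= rnorm (p x) by apply: rnorm_ge0.
have q0 x : 0 <= rnorm (q x) by apply: rnorm_ge0.
rewrite -[1]mulr1; apply: ler_pM;
  by rewrite ?sumr_ge0 ?(box_sum_le_lim p0 Hp) ?(box_sum_le_lim q0 Hq).
Qed.

Variable r : mi -> mi -> C.
Hypothesis Hr : forall a, coef_power a (r a) /\ norm1 (r a).

Lemma coef0 x : r 0 x = dirac 0 x.
Proof.
have mono0 (w : 'I_k -> C) : mono w (0 : mi) = 1.
  by rewrite /mono big1 // => j _; rewrite ffunE expr0.
apply: (coef_power_unique (Hr 0).1); split; first exact: summable_dirac.
by move=> z hz; rewrite mono0; have := sums_to_dirac_mono 0 z; rewrite mono0.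
Qed.

Lemma coefD a b x : r (a + b) x = conv (r a) (r b) x.
Proof.
apply: (coef_power_unique (Hr (a + b)).1); split.
  by apply: summable_conv; [exact: (Hr a).2 | exact: (Hr b).2].
move=> z hz; rewrite monoD; apply: sums_to_conv.
- by move=> j; apply: ltW.
- exact: ((Hr a).1.2 z hz).
- exact: ((Hr b).1.2 z hz).
- exact: (Hr a).2.
- exact: (Hr b).2.
Qed.

Lemma support_add a b s t : r a s != 0 -> r b t != 0 -> r (a + b) (s + t) != 0.
Proof.
move=> hs ht; rewrite coefD; apply: conv_support_add => //; try exact: (Hr _).2.
have := (Hr (a + b)).2; rewrite /norm1; congr cvgR.
by apply: functional_extensionality => N; apply: eq_bigr => y _; rewrite coefD.
Qed.

(* C_phi is applied to z^a + l z^b, of norm 2. *)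
Lemma norm_coef_power_add a b l : a != b -> rnorm l = 1 ->
  cvgR (fun N => \sum_(y <- box N) rnorm (r a y + l * r b y)) 2.
Proof.
move=> hab hl; pose F x := dirac a x + l * dirac b x.
have HF : summable F by apply: summableD; [|apply: summableMl]; apply: summable_dirac.
have HFr z : (forall j, rnorm (z j) <= 1) ->
    sums_to (fun x => F x * mono z x) (mono z a + l * mono z b).
  move=> _; have := sums_toD (sums_to_dirac_mono a z) (sums_toMl l (sums_to_dirac_mono b z)).
  by congr sums_to; apply: functional_extensionality => y; rewrite /F; ring.
have HFn : sums_to (fun x => `|F x|) (1 + 1).
  have := sums_toD (sums_to_point a (1 : C)) (sums_to_point b (1 : C)); congr sums_to.
  apply: functional_extensionality => y; rewrite /F /dirac.
  case: (eqVneq y a) => [ya|ya]; case: (eqVneq y b) => [yb|yb].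
  + by move: hab; rewrite -ya yb eqxx.
  + by rewrite mulr0 addr0 normr1.
  + by rewrite mulr1 !add0r norm_rnorm hl.
  + by rewrite mulr0 addr0 normr0.
have [c [Hc [Hcr Hcn]]] := isometry_coef HF HFr HFn.
have E : forall y, c y = r a y + l * r b y.
  apply: (coef_unique Hc _ Hcr).
    by apply: summableD; [|apply: summableMl]; [exact: (Hr a).1.1 | exact: (Hr b).1.1].
  move=> z hz; have := sums_toD ((Hr a).1.2 z hz) (sums_toMl l ((Hr b).1.2 z hz)).
  by congr sums_to; apply: functional_extensionality => y; ring.
have : sums_to (fun x => `|r a x + l * r b x|) (2 : R)%:C.
  by under eq_sums_to do rewrite -E; rewrite rmorphMn /= rmorph1.
by case/sums_to_normP.
Qed.

Lemma support_disjoint a b : a != b -> forall x, r a x = 0 \/ r b x = 0.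
Proof.
move=> hab x; apply: (disjoint_support _ (Hr a).2 (Hr b).2) => l hl.
exact: norm_coef_power_add.
Qed.

Lemma support_nonempty a : exists s, r a s != 0.
Proof.
apply: NNPP => H.
have z0 s : r a s = 0 by apply/eqP; apply: NNPP => h; apply: H; exists s; apply/negP.
have := (Hr a).2; rewrite /norm1 (_ : (fun N => _) = fun _ => 0) => [h|].
  by have /eqP := cvgR_unique h (cvgR_cst 0); rewrite oner_eq0.
by apply: functional_extensionality => N; rewrite big1 // => x _; rewrite z0 rnorm0.
Qed.

Lemma support_add_muln e v y1 y2 : r e v != 0 -> r y1 y2 != 0 ->
  forall m, r (e *+ m + y1) (v *+ m + y2) != 0.
Proof.
move=> he hy; elim=> [|m IH]; first by rewrite !mulr0n !add0r.
by rewrite !mulrS -!addrA; apply: support_add.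
Qed.

Lemma support_sum n (w : 'I_n -> nat) (c : 'I_n -> 'I_k) (V : 'I_n -> mi) :
  (forall l, r (unit_idx (c l)) (V l) != 0) ->
  r (\sum_l unit_idx (c l) *+ w l) (\sum_l V l *+ w l) != 0.
Proof.
move=> H; apply: (big_rec2 (fun y1 y2 => r y1 y2 != 0)).
  by rewrite coef0 /dirac eqxx oner_eq0.
by move=> l y1 y2 _ hy; apply: support_add_muln.
Qed.

Lemma support_lifts_relations n (c : 'I_n -> 'I_k) (V : 'I_n -> mi) :
  (forall l, r (unit_idx (c l)) (V l) != 0) -> lifts_relations c V.
Proof.
move=> H w1 w2 E; apply: NNPP => /eqP hne.
have h1 := support_sum w1 H; have h2 := support_sum w2 H.
case: (support_disjoint hne (\sum_l V l *+ w1 l)) => /eqP; first by apply/negP.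
by rewrite E; apply/negP.
Qed.

Variable sel : 'I_k -> mi.
Hypothesis Hsel : forall i, r (unit_idx i) (sel i) != 0.

Lemma support_single i t : r (unit_idx i) t != 0 -> t = sel i.
Proof.
move=> ht; apply: lifts_relations_eq; apply: support_lifts_relations => l.
by case: (unlift ord_max l).
Qed.

Lemma det_support_neq0 : \det (map_mx (fun n : nat => n%:Z) (\matrix_(i, j) sel i j)) != 0.
Proof. exact/lifts_relations_det/support_lifts_relations. Qed.

Lemma coef_unit_idx i x : r (unit_idx i) x = if x == sel i then r (unit_idx i) (sel i) else 0.
Proof.
case: eqP => [->|h] //; apply/eqP; apply: contraT => hx.
by case: h; apply: support_single.
Qed.

Lemma norm_coef_unit_idx i : `|r (unit_idx i) (sel i)| = 1.
Proof.
have h : cvgR (fun N => \sum_(x <- box N) rnorm (r (unit_idx i) x))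
    (rnorm (r (unit_idx i) (sel i))).
  move=> e e0; exists (\sum_j sel i j).+1 => N hN.
  rewrite (eq_bigr (fun x => if x == sel i then rnorm (r (unit_idx i) (sel i)) else 0)).
    by rewrite box_sum_point ?subrr ?normr0 // (box_mono hN) // mem_box_self.
  by move=> x _; rewrite coef_unit_idx; case: eqP; rewrite ?rnorm0.
by rewrite norm_rnorm (cvgR_unique h (Hr (unit_idx i)).2).
Qed.

Lemma mono_unit_idx (w : 'I_k -> C) i : mono w (unit_idx i) = w i.
Proof.
rewrite /mono (bigD1 i) //= big1 ?mulr1; first by rewrite ffunE eqxx expr1.
by move=> j hj; rewrite ffunE (negPf hj) expr0.
Qed.

Lemma phi_monomial z (hz : open_polydisc z) i :
  phi z i = r (unit_idx i) (sel i) * \prod_(j < k) z j ^+ sel i j.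
Proof.
have hz' j : rnorm (z j) < 1 by rewrite -rnorm_lt1.
have := (Hr (unit_idx i)).1.2 z hz'; rewrite mono_unit_idx.
rewrite (@eq_sums_to _ _ _
  (fun x => if x == sel i then r (unit_idx i) (sel i) * mono z (sel i) else 0)).
  by move=> H; rewrite -(sums_to_unique (sums_to_point _ _) H) /mono.
by move=> x; rewrite coef_unit_idx; case: eqP => [->|_]; rewrite ?mul0r.
Qed.

End CoefficientsOfPowers.

Lemma isometry_monomial (R : realType) (k : nat) (phi : ('I_k -> R[i]) -> 'I_k -> R[i]) :
  Cphi_maps_Aplus phi -> Cphi_isometry phi ->
  exists (A : 'M[nat]_k) (eps : 'I_k -> R[i]),
    \det (map_mx (fun n : nat => n%:Z) A) != 0 /\ (forall i, `|eps i| = 1) /\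
    (forall z, open_polydisc z -> forall i, phi z i = eps i * \prod_(j < k) z j ^+ A i j).
Proof.
move=> Hmap Hiso.
have [r Hr] := ClassicalEpsilon.choice _ (exists_coef_power Hmap Hiso).
have [sel Hsel] := ClassicalEpsilon.choice _ (fun i : 'I_k => support_nonempty Hr (unit_idx i)).
exists (\matrix_(i, j) sel i j), (fun i => r (unit_idx i) (sel i)).
split; first exact (det_support_neq0 Hmap Hiso Hr Hsel).
split=> [i|z hz i]; first exact (norm_coef_unit_idx Hmap Hiso Hr Hsel i).
by rewrite (phi_monomial Hmap Hiso Hr Hsel hz); under [in RHS]eq_bigr do rewrite mxE.
Qed.

Local Close Scope complex_scope.

Theorem theorem17 (R : realType) (k : nat)
    (phi : ('I_k -> R[i]) -> ('I_k -> R[i])) :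
  (0 < k)%N ->
  (forall z, open_polydisc z -> closed_polydisc (phi z)) ->
  (forall i : 'I_k, analytic_on_polydisc (fun z => phi z i)) ->
  Cphi_maps_Aplus phi ->
  (Cphi_isometry phi <->
   exists (A : 'M[nat]_k) (eps : 'I_k -> R[i]),
     \det (map_mx (fun n : nat => n%:Z) A) != 0 /\
     (forall i, `|eps i| = 1) /\
     (forall z, open_polydisc z -> forall i : 'I_k,
        phi z i = eps i * \prod_(j < k) z j ^+ A i j)).
Proof.
move=> _ _ _ Hmap; split; first exact: isometry_monomial.
by case=> A [eps [hdet [heps hphi]]]; exact (monomial_isometry hdet heps hphi).
Qed.
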